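(* For every operator $\mathtt P\in\partial_z+z^{-1}\mathcal D_-$, the equation $\mathtt P\cdot\Psi=0$ has, up to multiplication by a constant, exactly one nonzero solution $\Psi\in H$, and this solution can be normalized so that $\Psi\in1+H_-$. In particular, for $\mathcal W\in{\rm Gr}^{(0)}_+$ the equation $\mathtt P_{\mathcal W}\cdot\Psi=0$ has a unique solution in $1+H_-$, namely the wave function of $\mathcal W$ (the unique element of $\mathcal W\cap(1+H_-)$).
   Context: $H_+=\mathbb C[z]$, $H_-=z^{-1}\mathbb C[[z^{-1}]]$, $H=H_+\oplus H_-$. ${\rm Gr}^{(0)}_+$ is the set of closed subspaces $\mathcal W\subset H$ with $\pi_+:\mathcal W\to H_+$ (projection along $H_-$) an isomorphism. $\mathcal D=\mathbb C((z^{-1}))[[\partial_z]]$ is the ring of differential operators $\sum_{m\ge0}a_m(z)\partial_z^m$, $a_m\in H$, acting on $H$; $\mathcal D_\pm=H_\pm[[\partial_z]]$. For $\mathcal W\in{\rm Gr}^{(0)}_+$ let $\mathtt G_{\mathcal W}$ be the unique element of $\{\mathtt G\in\mathcal D:\mathtt G-1\in\mathcal D_-\}$ with $\mathcal W=\mathtt G_{\mathcal W}\cdot H_+$ (Sato's theorem), and $\mathtt P_{\mathcal W}:=\mathtt G_{\mathcal W}\partial_z\mathtt G_{\mathcal W}^{-1}$. *)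

From mathcomp Require Import all_boot all_algebra.
From mathcomp Require Import boolp classical_sets fsbigop.
Set Implicit Arguments. Unset Strict Implicit. Unset Printing Implicit Defensive.
Import GRing.Theory Num.Theory.
Local Open Scope ring_scope.

Section Defs.
Variable K : fieldType.

(* An element of H = C((z^{-1})) is given by its coefficient sequence:
   f n = coefficient of z^n. *)
Definition ser := int -> K.

Definition inH (f : ser) : Prop := exists N : int, forall n : int, N < n -> f n = 0.
Definition inHplus (f : ser) : Prop := inH f /\ forall n : int, n < 0 -> f n = 0.
Definition inHminus (f : ser) : Prop := forall n : int, 0 <= n -> f n = 0.
Definition inzHminus (f : ser) : Prop := forall n : int, -1 <= n -> f n = 0.
Definition inOnePlusHminus (f : ser) : Prop := f 0 = 1 /\ forall n : int, 0 < n -> f n = 0.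

Definition scst (c : K) : ser := fun n => if n == 0 then c else 0.
Definition sadd (f g : ser) : ser := fun n => f n + g n.
Definition ssub (f g : ser) : ser := fun n => f n - g n.
Definition sscale (c : K) (f : ser) : ser := fun n => c * f n.
Definition piplus (f : ser) : ser := fun n => if 0 <= n then f n else 0.
(* d/dz (z^{n+1}) = (n+1) z^n *)
Definition dz (f : ser) : ser := fun n => (n + 1)%:~R * f (n + 1).
Definition dzn (m : nat) (f : ser) : ser := iter m dz f.
(* product of Laurent series (a finitely supported sum for f, g in H) *)
Definition smul (f g : ser) : ser :=
  fun n => \sum_(i \in [set: int]) (f i * g (n - i)).

(* A differential operator sum_m a_m(z) d_z^m is given by m |-> a_m. *)
Definition op := nat -> ser.
Definition inD (P : op) : Prop := forall m, inH (P m).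
Definition inDminus (P : op) : Prop := forall m, inHminus (P m).
Definition opone : op := fun m => if m == 0%N then scst 1 else scst 0.
Definition opdz : op := fun m => if m == 1%N then scst 1 else scst 0.
Definition opsub (P Q : op) : op := fun m => ssub (P m) (Q m).

Definition act (P : op) (f : ser) : ser :=
  fun j => \sum_(m \in [set: nat]) smul (P m) (dzn m f) j.

(* Composition in D, by the Leibniz rule
   (a d^m)(b d^n) = sum_k binom(m,k) a b^{(k)} d^{m-k+n}. *)
Definition comp (A B : op) : op :=
  fun r j => \sum_(p \in [set: nat * nat])
     (let m := p.1 in let n := p.2 in
      if (n <= r)%N && (r <= m + n)%N then
        'C(m, m + n - r)%:R * smul (A m) (dzn (m + n - r) (B n)) j
      else 0).

Definition inDzPlusZinvDminus (P : op) : Prop :=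
  forall m, inzHminus (opsub P opdz m).
Definition inOnePlusDminus (G : op) : Prop := inDminus (opsub G opone).

(* Gr^{(0)}_+ : closed subspaces W of H (closed for the z^{-1}-adic topology)
   such that pi_+ : W -> H_+ is a (linear) isomorphism. *)
Definition adic_closed (W : ser -> Prop) : Prop :=
  forall f : ser, inH f ->
    (forall k : nat, exists w, W w /\ forall n : int, - (k%:Z) < n -> f n = w n) ->
    W f.
Definition inGr0plus (W : ser -> Prop) : Prop :=
  (forall w, W w -> inH w) /\
  W (scst 0) /\
  (forall v w, W v -> W w -> W (sadd v w)) /\
  (forall c w, W w -> W (sscale c w)) /\
  adic_closed W /\
  (forall h, inHplus h -> exists w, W w /\ piplus w = h /\
         forall w', W w' -> piplus w' = h -> w' = w).

Definition isSatoOp (W : ser -> Prop) (G : op) : Prop :=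
  inOnePlusDminus G /\
  forall w, W w <-> exists h, inHplus h /\ w = act G h.

(* P = P_W = G_W d_z G_W^{-1} (the inverse of G_W in D also lies in 1 + D_-). *)
Definition isPW (W : ser -> Prop) (P : op) : Prop :=
  exists G Gi, [/\ isSatoOp W G, inOnePlusDminus Gi,
                   comp G Gi = opone, comp Gi G = opone &
                   P = comp (comp G opdz) Gi].

End Defs.

From Pilot Require Import Defs.
From mathcomp Require Import all_boot all_algebra.
From mathcomp Require Import reals complex.
From mathcomp Require Import boolp classical_sets fsbigop.
From mathcomp Require Import zify ring.
Set Implicit Arguments. Unset Strict Implicit. Unset Printing Implicit Defensive.
Import GRing.Theory Num.Theory.
Local Open Scope classical_set_scope.
Local Open Scope ring_scope.

(* Part 1.  If P = d_z + (terms in z^{-1} D_-), the coefficient of z^{j-1} in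
   P.f is j f_j plus a combination of the f_p with p > j.  Hence P.f = 0 is a
   triangular recursion: it forces f_p = 0 for p > 0, leaves f_0 free, and
   determines f_{-1}, f_{-2}, ... successively; the normalized solution is
   built as the limit of the stages [approx n] of this recursion.

   Part 2.  The action of D on bounded series is compatible with composition
   (proved from the Vandermonde identity for falling factorials), so for
   P_W = G d_z G^{-1} we get P_W.f = G.(d_z (G^{-1}.f)).  The solutions in
   1 + H_- are therefore G.c for constants c, i.e. the series G.1, which is
   the unique element of W /\ (1 + H_-). *)

Section FiniteSums.
Variable K : numFieldType.

Definition int_range (lo : int) (n : nat) : seq int := [seq lo + (i%:Z) | i <- iota 0 n].

Lemma mem_int_range lo n x : (x \in int_range lo n) = (lo <= x) && (x < lo + n%:Z).
Proof.
apply/mapP/idP.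
  by case=> i; rewrite mem_iota => /andP[_ hi] ->; apply/andP; split; lia.
move=> /andP[h1 h2]; exists (absz (x - lo)); last by lia.
by rewrite mem_iota; lia.
Qed.

Lemma uniq_int_range lo n : uniq (int_range lo n).
Proof. by rewrite map_inj_uniq ?iota_uniq // => a b /= h; lia. Qed.

Lemma fsum_int_range (F : int -> K) lo n :
  (forall x, (x < lo) || (lo + n%:Z <= x) -> F x = 0) ->
  \sum_(x \in [set: int]) F x = \sum_(x <- int_range lo n) F x.
Proof.
move=> h; rewrite (fsbigE (int_range lo n)) ?uniq_int_range //.
- by apply: eq_bigl => x; rewrite in_setT.
- by move=> x _; rewrite mem_int_range => hx; apply: h; lia.
Qed.

Lemma fsum_nat_prefix (F : nat -> K) n :
  (forall m, (n <= m)%N -> F m = 0) ->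
  \sum_(m \in [set: nat]) F m = \sum_(m < n) F m.
Proof.
move=> h; rewrite (fsbigE (iota 0 n)) ?iota_uniq //.
- rewrite -(big_mkord xpredT) /index_iota subn0.
  by apply: eq_bigl => x; rewrite in_setT.
- by move=> x _; rewrite mem_iota => hx; apply: h; lia.
Qed.

Lemma fsum_nat_box (F : nat * nat -> K) a b :
  (forall m n, ~~ ((m < a) && (n < b))%N -> F (m, n) = 0) ->
  \sum_(p \in [set: nat * nat]) F p = \sum_(m < a) \sum_(n < b) F (m : nat, n : nat).
Proof.
move=> h; rewrite (fsbigE [seq (x, y) | x <- iota 0 a, y <- iota 0 b]).
- rewrite big_seq_cond.
  rewrite (eq_bigl (fun p => p \in [seq (x, y) | x <- iota 0 a, y <- iota 0 b])); last first.
    by move=> x; rewrite in_setT andbT.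
  rewrite -big_seq big_allpairs.
  rewrite -(big_mkord xpredT (fun m => \sum_(n < b) F (m, n : nat))) /index_iota subn0.
  by apply: eq_bigr => m _; rewrite -(big_mkord xpredT (fun n => F (m, n))) /index_iota subn0.
- apply: allpairs_uniq; rewrite ?iota_uniq //.
  by move=> [x1 y1] [x2 y2] _ _ /= [-> ->].
- by [].
- move=> [m n] _ hp; apply: h; apply/negP => /andP[h1 h2]; move/negP: hp; apply.
  by apply/allpairsP; exists (m, n); rewrite !mem_iota /=; split => //; lia.
Qed.

Lemma big_seq_pick (r : seq int) i (F : int -> K) : uniq r -> i \in r ->
  \sum_(x <- r) (if x == i then F x else 0) = F i.
Proof. by move=> u hi; rewrite (bigD1_seq i) //= eqxx big1 ?addr0 // => x /negPf ->. Qed.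

Lemma sum4_exchange_outer (I1 I2 I3 I4 : Type) (r1 : seq I1) (r2 : seq I2) (r3 : seq I3)
  (r4 : seq I4) (F : I1 -> I2 -> I3 -> I4 -> K) :
  \sum_(a <- r1) \sum_(b <- r2) \sum_(c <- r3) \sum_(d <- r4) F a b c d =
  \sum_(c <- r3) \sum_(d <- r4) \sum_(b <- r2) \sum_(a <- r1) F a b c d.
Proof.
rewrite exchange_big /=.
transitivity (\sum_(b <- r2) \sum_(c <- r3) \sum_(d <- r4) \sum_(a <- r1) F a b c d).
  apply: eq_bigr => b _; rewrite exchange_big /=; apply: eq_bigr => c _.
  by rewrite exchange_big.
by rewrite exchange_big /=; apply: eq_bigr => c _; rewrite exchange_big.
Qed.

Lemma sum4_exchange_inner (I1 I2 I3 I4 : Type) (r1 : seq I1) (r2 : seq I2) (r3 : seq I3)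
  (r4 : seq I4) (F : I1 -> I2 -> I3 -> I4 -> K) :
  \sum_(a <- r1) \sum_(b <- r2) \sum_(c <- r3) \sum_(d <- r4) F a b c d =
  \sum_(a <- r1) \sum_(c <- r3) \sum_(d <- r4) \sum_(b <- r2) F a b c d.
Proof.
apply: eq_bigr => a _; rewrite exchange_big /=; apply: eq_bigr => c _.
by rewrite exchange_big.
Qed.

End FiniteSums.

(* Falling factorials x (x - 1) ... (x - k + 1): the coefficients of the
   iterated derivative, d_z^k z^x = falling x k z^(x - k). *)
Section Falling.
Variable K : numFieldType.

Definition falling (x : int) (k : nat) : K := \prod_(i < k) ((x - i%:Z)%:~R : K).

Lemma falling0 x : falling x 0 = 1.
Proof. by rewrite /falling big_ord0. Qed.

Lemma fallingS x k : falling x k.+1 = falling x k * (x - k%:Z)%:~R.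
Proof. by rewrite /falling big_ord_recr. Qed.

Lemma fallingD x a b : falling x (a + b) = falling x a * falling (x - a%:Z) b.
Proof.
rewrite /falling big_split_ord /=; congr (_ * _); apply: eq_bigr => i _.
by congr (_%:~R); rewrite /=; lia.
Qed.

Lemma falling_vanish x k : 0 <= x -> x < k%:Z -> falling x k = 0.
Proof.
move=> h1 h2; have hk : (absz x < k)%N by lia.
rewrite /falling (bigD1 (Ordinal hk)) //=.
by rewrite (_ : x - _ = 0) ?mul0r //; lia.
Qed.

Lemma dznE (f : ser K) m q : dzn m f q = falling (q + m%:Z) m * f (q + m%:Z).
Proof.
elim: m q => [|m IH] q; first by rewrite /dzn /= falling0 mul1r addr0.
rewrite /dzn iterS -/(dzn m f) /dz IH fallingS.
rewrite (_ : q + 1 + m%:Z = q + m.+1%:Z); last by lia.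
rewrite (_ : q + m.+1%:Z - m%:Z = q + 1); last by lia.
by rewrite mulrA [X in X * _]mulrC.
Qed.

Lemma falling_vandermonde x y m :
  falling (x + y) m = \sum_(k < m.+1) 'C(m, k)%:R * falling x k * falling y (m - k).
Proof.
elim: m => [|m IH]; first by rewrite big_ord1 !falling0 bin0 !mul1r.
rewrite fallingS IH big_distrl /=.
have step (k : 'I_m.+1) :
    'C(m, k)%:R * falling x k * falling y (m - k) * (x + y - m%:Z)%:~R
  = 'C(m, k)%:R * falling x k.+1 * falling y (m - k)
    + 'C(m, k)%:R * falling x k * falling y (m.+1 - k).
  have hk := ltn_ord k.
  rewrite fallingS (_ : (m.+1 - k = (m - k).+1)%N); last by lia.
  rewrite fallingS (_ : x + y - m%:Z = (x - k%:Z) + (y - (m - k)%N%:Z)); last by lia.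
  by rewrite intrD; ring.
rewrite (eq_bigr _ (fun k _ => step k)) big_split /= [in RHS]big_ord_recl /=.
rewrite [X in _ = _ + X](_ : _ =
    \sum_(i < m.+1) 'C(m, i)%:R * falling x i.+1 * falling y (m - i)
  + \sum_(i < m.+1) 'C(m, i.+1)%:R * falling x i.+1 * falling y (m - i)); last first.
  by rewrite -big_split /=; apply: eq_bigr => i _; rewrite binS natrD subSS; ring.
rewrite addrCA; congr (_ + _).
rewrite big_ord_recl /= [in RHS]big_ord_recr /= !bin0 (bin_small (ltnSn m)).
rewrite mul0r mul0r addr0.
by congr (_ + _); apply: eq_bigr => i _; rewrite /bump /= add1n subSS.
Qed.

(* The coefficient identity behind the Leibniz rule used in [comp]:
   sum_r C(m, m+n-r) (s)_(m+n-r) (q)_r over n <= r <= m+n equals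
   (q)_n (s + q - n)_m. *)
Lemma leibniz_coef m n s q M : (m + n < M)%N ->
  \sum_(r < M) (if (n <= r)%N && (r <= m + n)%N then
       'C(m, m + n - r)%:R * falling s (m + n - r) * falling q r else 0)
  = falling q n * falling (s + q - n%:Z) m.
Proof.
move=> hM; rewrite -(big_mkord xpredT (fun r => if (n <= r)%N && (r <= m + n)%N then
       'C(m, m + n - r)%:R * falling s (m + n - r) * falling q r else 0)).
rewrite (big_cat_nat _ (n := n)) //=; last by lia.
rewrite big_nat_cond big1 ?add0r; last first.
  by move=> r /andP[/andP[_ hr] _]; rewrite ifF //; apply/negbTE; lia.
rewrite (big_cat_nat _ (n := (m + n).+1)) //=; last by lia.
rewrite [X in _ + X]big_nat_cond [X in _ + X]big1 ?addr0; last first.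
  by move=> r /andP[/andP[hr _] _]; rewrite ifF //; apply/negbTE; lia.
rewrite -{1}(add0n n) big_addn (_ : ((m + n).+1 - n = m.+1)%N); last by lia.
rewrite (_ : s + q - n%:Z = (q - n%:Z) + s); last by lia.
rewrite falling_vandermonde big_distrr big_mkord /=; apply: eq_bigr => i _.
have hi := ltn_ord i.
rewrite ifT; last by apply/andP; split; lia.
rewrite (_ : (m + n - (i + n) = m - i)%N); last by lia.
by rewrite addnC fallingD bin_sub; [ring|lia].
Qed.

End Falling.

Arguments falling {K} x k.

Section Action.
Variable K : numFieldType.

Definition deg_le (f : ser K) (N : int) : Prop := forall p, N < p -> f p = 0.

Definition op_nonpos (A : op K) : Prop := forall m, deg_le (A m) 0.

Lemma smul_dznE (a g : ser K) k l :
  smul a (dzn k g) l = \sum_(s \in [set: int]) a (l + k%:Z - s) * (falling s k * g s).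
Proof.
rewrite /smul (reindex_fsbigT (fun s => l + k%:Z - s)).
  apply: eq_fsbigr => s _; rewrite dznE.
  by rewrite (_ : l - (l + k%:Z - s) + k%:Z = s) //; lia.
by exists (fun s => l + k%:Z - s) => s /=; lia.
Qed.

Lemma actE (A : op K) f j : act A f j =
  \sum_(m \in [set: nat]) \sum_(s \in [set: int]) A m (j + m%:Z - s) * (falling s m * f s).
Proof. by rewrite /act; apply: eq_fsbigr => m _; rewrite smul_dznE. Qed.

Lemma act_deg_le A f N : op_nonpos A -> deg_le f N -> deg_le (act A f) N.
Proof.
move=> hA hf j hj; rewrite actE fsbig1 // => m _; rewrite fsbig1 // => s _.
have [hs|hs] := ltrP N s; first by rewrite hf // !mulr0.
by rewrite hA ?mul0r //; lia.
Qed.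

Lemma act_finite A f N j M lo n : op_nonpos A -> deg_le f N ->
  N < j + M%:Z -> lo <= j -> N < lo + n%:Z ->
  act A f j = \sum_(m < M) \sum_(s <- int_range lo n)
                A m (j + m%:Z - s) * (falling s m * f s).
Proof.
move=> hA hf h1 h2 h3; rewrite actE (fsum_nat_prefix (n:=M)).
  apply: eq_bigr => m _; rewrite (fsum_int_range (lo:=lo) (n:=n)) // => x hx.
  have [hs|hs] := ltrP N x; first by rewrite hf // !mulr0.
  by rewrite hA ?mul0r //; lia.
move=> m hm; rewrite fsbig1 // => s _.
have [hs|hs] := ltrP N s; first by rewrite hf // !mulr0.
by rewrite hA ?mul0r //; lia.
Qed.

Lemma act_scale (A : op K) (c : K) (f : ser K) j : act A (sscale c f) j = c * act A f j.
Proof.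
rewrite !actE mulr_fsumr; apply: eq_fsbigr => m _.
by rewrite mulr_fsumr; apply: eq_fsbigr => s _; rewrite /sscale; ring.
Qed.

Lemma act_eq0 (A : op K) (f : ser K) j : (forall p, f p = 0) -> act A f j = 0.
Proof.
move=> h; rewrite actE fsbig1 // => m _; rewrite fsbig1 // => s _.
by rewrite h !mulr0.
Qed.

Lemma act_opone (f : ser K) : act (opone K) f = f.
Proof.
apply/funext => j; rewrite actE (fsum_nat_prefix (n:=1)).
  rewrite big_ord1 (fsum_int_range (lo:=j) (n:=1)).
    rewrite /int_range /= big_seq1 /opone /= /scst subrr eqxx falling0 !mul1r.
    by congr (f _); lia.
  by move=> x hx; rewrite /opone /= /scst ifF ?mul0r //; apply/negbTE; lia.
move=> m hm; rewrite fsbig1 // => s _.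
by rewrite /opone ifF ?mul0r ?/scst; [case: ifP|]; rewrite ?mul0r //; apply/negbTE; lia.
Qed.

Lemma act_opdz (f : ser K) : act (opdz K) f = dz f.
Proof.
apply/funext => j; rewrite actE (fsum_nat_prefix (n:=2)).
  rewrite big_ord_recl big_ord1 /= fsbig1; last first.
    by move=> s _; rewrite /opdz /= /scst; case: ifP; rewrite mul0r.
  rewrite add0r (fsum_int_range (lo:=j + 1) (n:=1)).
    rewrite /int_range /= big_seq1 /opdz /= /scst.
    have -> : bump 0 0 = 1%N by [].
    have -> : j + 1%N%:Z - (j + 1 + 0%Z) = 0 by lia.
    have -> : j + 1 + 0%Z = j + 1 by lia.
    rewrite eqxx mul1r /dz /falling big_ord1 /=.
    by have -> : j + 1 - 0%N%:Z = j + 1 by lia.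
  by move=> x hx; rewrite /opdz /bump /= /scst ifF ?mul0r //; apply/negbTE; lia.
move=> m hm; rewrite fsbig1 // => s _.
by rewrite /opdz ifF ?mul0r ?/scst; [case: ifP|]; rewrite ?mul0r //; apply/negbTE; lia.
Qed.

End Action.

Section Composition.
Variable K : numFieldType.

Lemma comp_nonpos (A B : op K) : op_nonpos A -> op_nonpos B -> op_nonpos (Defs.comp A B).
Proof.
move=> hA hB r l hl; rewrite /Defs.comp fsbig1 // => -[m n] _ /=.
case: ifP => // _; rewrite smul_dznE fsbig1 ?mulr0 // => s _.
have [hs|hs] := ltrP 0 s; first by rewrite hB // !mulr0.
by rewrite hA ?mul0r //; lia.
Qed.

Lemma comp_finite (A B : op K) r l M lo w : op_nonpos A -> op_nonpos B ->
  (r < M)%N -> lo <= l -> 0 < lo + w%:Z -> r%:Z <= l + M%:Z ->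
  Defs.comp A B r l = \sum_(m < M) \sum_(n < M)
    (if (n <= r)%N && (r <= m + n)%N then 'C(m, m + n - r)%:R *
       \sum_(s <- int_range lo w)
         A m (l + (m + n - r)%N%:Z - s) * (falling s (m + n - r) * B n s)
     else 0).
Proof.
move=> hA hB h1 h2 h3 h4; rewrite /Defs.comp (fsum_nat_box (a:=M) (b:=M)).
  apply: eq_bigr => m _; apply: eq_bigr => n _ /=.
  case: ifP => // _; rewrite smul_dznE (fsum_int_range (lo:=lo) (n:=w)) // => x hx.
  have [hs|hs] := ltrP 0 x; first by rewrite hB // !mulr0.
  by rewrite hA ?mul0r //; lia.
move=> m n hmn /=; case: ifP => // /andP[c1 c2].
rewrite smul_dznE fsbig1 ?mulr0 // => s _.
have [hs|hs] := ltrP s (l + (m + n - r)%N%:Z); first by rewrite hA ?mul0r //; lia.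
have [hs2|hs2] := ltrP 0 s; first by rewrite hB // !mulr0.
by rewrite falling_vanish ?mul0r ?mulr0 //; lia.
Qed.

(* The contribution of the pair (a_m d^m, b_n d^n) and the index q to the
   coefficient of z^j is the same on both sides of (A o B).f = A.(B.f):
   after the substitution p = s + q - n this is [leibniz_coef]. *)
Lemma act_comp_term (A B : op K) m n j q (c : K) (w M : nat) :
  op_nonpos A -> op_nonpos B -> j <= q -> q <= j + w%:Z -> (w < M)%N ->
  \sum_(r < M)
    (if (n <= r)%N && (r <= m + n)%N then 'C(m, m + n - r)%:R *
       \sum_(s <- int_range (- w%:Z) w.+1)
         A m ((j + r%:Z - q) + (m + n - r)%N%:Z - s) * (falling s (m + n - r) * B n s)
     else 0) * (falling q r * c)
  = \sum_(p <- int_range j w.+1)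
      A m (j + m%:Z - p) * (falling p m * (B n (p + n%:Z - q) * (falling q n * c))).
Proof.
move=> hA hB hq1 hq2 hwM.
rewrite -(fsum_int_range (lo:=j) (n:=w.+1)
  (F := fun p => A m (j + m%:Z - p) * (falling p m * (B n (p + n%:Z - q) * (falling q n * c)))));
  last first.
  move=> x hx /=; have [hx1|hx1] := ltrP x j; first by rewrite hA ?mul0r //; lia.
  by rewrite hB ?mul0r ?mulr0 //; lia.
rewrite (reindex_fsbigT (fun s => s + q - n%:Z)); last first.
  by exists (fun p => p - q + n%:Z) => x /=; lia.
rewrite (fsum_int_range (lo:= - w%:Z) (n:=w.+1)); last first.
  move=> x hx /=; have [hx1|hx1] := ltrP 0 x; first by rewrite hB ?mul0r ?mulr0 //; lia.
  by rewrite hA ?mul0r //; lia.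
rewrite (eq_bigr (fun r : 'I_M => \sum_(s <- int_range (- w%:Z) w.+1)
   (if (n <= r)%N && (r <= m + n)%N then
      'C(m, m + n - r)%:R * falling s (m + n - r) * falling q r else 0)
     * (A m (j + m%:Z + n%:Z - q - s) * B n s * c))); last first.
  move=> r _; case: ifP => cond; last by rewrite mul0r big1 // => s _; rewrite mul0r.
  rewrite big_distrr big_distrl /=; apply: eq_bigr => s _.
  rewrite (_ : j + r%:Z - q + (m + n - r)%N%:Z - s = j + m%:Z + n%:Z - q - s); last by lia.
  by ring.
rewrite exchange_big /=; apply: eq_bigr => s _; rewrite -big_distrl /=.
rewrite (_ : j + m%:Z - (s + q - n%:Z) = j + m%:Z + n%:Z - q - s); last by lia.
rewrite (_ : s + q - n%:Z + n%:Z - q = s); last by lia.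
have [hmn|hmn] := ltnP (m + n) M; first by rewrite leibniz_coef //; ring.
have [hs|hs] := ltrP 0 s; first by rewrite hB //; ring.
by rewrite hA; [ring|lia].
Qed.

Lemma act_comp (A B : op K) (f : ser K) N : op_nonpos A -> op_nonpos B -> deg_le f N ->
  act (Defs.comp A B) f = act A (act B f).
Proof.
move=> hA hB hf; apply/funext => j.
pose w := (2 * (absz j + absz N + 1))%N; pose M := (3 * (absz j + absz N + 1))%N.
have hAB := comp_nonpos hA hB.
have hBf := act_deg_le hB hf.
rewrite (act_finite (N:=N) (M:=M) (lo:=j) (n:=w.+1)) //; try lia.
rewrite (act_finite (N:=N) (M:=M) (lo:=j) (n:=w.+1)) //; try lia.
pose Q := int_range j w.+1.
pose S := int_range (- w%:Z) w.+1.
transitivity (\sum_(m < M) \sum_(n < M) \sum_(q <- Q) \sum_(r < M)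
   (if (n <= r)%N && (r <= m + n)%N then 'C(m, m + n - r)%:R *
       \sum_(s <- S) A m ((j + r%:Z - q) + (m + n - r)%N%:Z - s)
                       * (falling s (m + n - r) * B n s)
     else 0) * (falling q r * f q)).
  rewrite (eq_bigr (fun r : 'I_M => \sum_(q <- Q) \sum_(m < M) \sum_(n < M)
   (if (n <= r)%N && (r <= m + n)%N then 'C(m, m + n - r)%:R *
       \sum_(s <- S) A m ((j + r%:Z - q) + (m + n - r)%N%:Z - s)
                       * (falling s (m + n - r) * B n s)
     else 0) * (falling q r * f q))); last first.
    move=> r _; rewrite big_seq [RHS]big_seq; apply: eq_bigr => q.
    rewrite mem_int_range => hq.
    rewrite (comp_finite (M:=M) (lo:= - w%:Z) (w:=w.+1)) //; try lia.
    by rewrite big_distrl /=; apply: eq_bigr => m _; rewrite big_distrl.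
  by rewrite sum4_exchange_outer.
transitivity (\sum_(m < M) \sum_(n < M) \sum_(q <- Q) \sum_(p <- Q)
   A m (j + m%:Z - p) * (falling p m * (B n (p + n%:Z - q) * (falling q n * f q)))).
  apply: eq_bigr => m _; apply: eq_bigr => n _.
  rewrite big_seq [RHS]big_seq; apply: eq_bigr => q; rewrite mem_int_range => hq.
  by apply: act_comp_term => //; lia.
transitivity (\sum_(m < M) \sum_(p <- Q) \sum_(n < M) \sum_(q <- Q)
   A m (j + m%:Z - p) * (falling p m * (B n (p + n%:Z - q) * (falling q n * f q)))).
  by rewrite [RHS]sum4_exchange_inner.
apply: eq_bigr => m _.
rewrite big_seq [RHS]big_seq; apply: eq_bigr => p; rewrite mem_int_range => hp.
rewrite (act_finite (N:=N) (M:=M) (lo:=j) (n:=w.+1)) //; try lia.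
rewrite big_distrr /= big_distrr /=; apply: eq_bigr => n _.
by rewrite big_distrr /= big_distrr /=; apply: eq_bigr => q _; ring.
Qed.

End Composition.

Section Part1.
Variable K : numFieldType.
Variable P : op K.
Hypothesis hP : inDzPlusZinvDminus P.

Lemma P_coef m l : -1 <= l -> P m l = if (m == 1%N) && (l == 0) then 1 else 0.
Proof.
move=> hl; have := hP m hl; rewrite /opsub /ssub /opdz /scst.
by case: (m == 1%N) => /=; move/eqP; rewrite subr_eq0 => /eqP ->; case: (l == 0).
Qed.

Lemma P_nonpos : op_nonpos P.
Proof.
by move=> m l hl; rewrite P_coef; [rewrite ifF //; apply/negbTE|]; lia.
Qed.

Definition above (f : ser K) (j : int) : ser K := fun p => if p <= j then 0 else f p.

Lemma above_deg_le f N j : deg_le f N -> deg_le (above f j) N.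
Proof. by move=> hf p hp; rewrite /above; case: ifP => // _; apply: hf. Qed.

Lemma act_P_triangular f N j : deg_le f N ->
  act P f (j - 1) = j%:~R * f j + act P (above f j) (j - 1).
Proof.
move=> hf; pose L := (absz (N - j) + 2)%N.
rewrite (act_finite (N:=N) (M:=L) (lo:=j-1) (n:=L)) //; try lia; last exact: P_nonpos.
rewrite (act_finite (f := above f j) (N:=N) (M:=L) (lo:=j-1) (n:=L)) //; try lia;
  [|exact: P_nonpos|exact: above_deg_le].
rewrite (eq_bigr (fun m : 'I_L =>
   \sum_(s <- int_range (j - 1) L) P m (j - 1 + m%:Z - s) * (falling s m * above f j s) +
   \sum_(s <- int_range (j - 1) L)
     (if s == j then P m (j - 1 + m%:Z - s) * (falling s m * f s) else 0))); last first.
  move=> m _; rewrite -big_split /=; apply: eq_bigr => s _.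
  rewrite /above; case: eqP => [->|hsj]; first by rewrite ifT ?mul0r ?mulr0 ?add0r //; lia.
  case: ifP => hs; last by rewrite addr0.
  by rewrite P_coef; [rewrite ifF ?mul0r ?addr0 //; apply/negbTE|]; lia.
rewrite big_split /= addrC; congr (_ + _).
have hj : j \in int_range (j - 1) L by rewrite mem_int_range; lia.
under eq_bigr => m _ do rewrite big_seq_pick ?uniq_int_range //.
have h1 : (1 < L)%N by lia.
rewrite (bigD1 (Ordinal h1)) //= big1 ?addr0; last first.
  move=> m hm; rewrite P_coef; last by lia.
  rewrite ifF ?mul0r //; apply/negbTE; apply/negP => /andP[/eqP h _]; move/negP: hm; apply.
  by apply/eqP; apply: val_inj.
rewrite P_coef; last by lia.
rewrite ifT; last by apply/andP; split => //; apply/eqP; lia.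
by rewrite mul1r /falling big_ord1 /= subr0.
Qed.

Lemma act_P_local f g j : (forall p, j <= p -> f p = g p) -> act P f (j - 1) = act P g (j - 1).
Proof.
move=> h; rewrite !actE; apply: eq_fsbigr => m _; apply: eq_fsbigr => s _.
have [hs|hs] := lerP j s; first by rewrite h.
by rewrite P_coef; [rewrite ifF ?mul0r //; apply/negbTE|]; lia.
Qed.

(* The n-th stage of the recursion: 1 corrected at the indices -1, ..., -n
   so that (P.approx n)_p = 0 for -n-1 <= p (see [approx_sol]). *)
Fixpoint approx (n : nat) : ser K :=
  match n with
  | 0%N => scst 1
  | n'.+1 => fun p => if p == - (n'.+1)%:Z then
        - act P (approx n') (- (n'.+1)%:Z - 1) / (- (n'.+1)%:Z)%:~R else approx n' p
  end.

Lemma approx_pos n p : 0 < p -> approx n p = 0.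
Proof.
elim: n => [|n IH] hp /=; first by rewrite /scst ifF //; apply/negbTE; lia.
by rewrite ifF ?IH //; apply/negbTE; lia.
Qed.

Lemma approx_zero n : approx n 0 = 1.
Proof. by elim: n => [|n IH] /=; first by rewrite /scst eqxx. Qed.

Lemma approx_low n p : p < - n%:Z -> approx n p = 0.
Proof.
elim: n p => [|n IH] p hp /=; first by rewrite /scst ifF //; apply/negbTE; lia.
by rewrite ifF ?IH //; [lia | apply/negbTE; lia].
Qed.

Lemma approx_stable n k p : - n%:Z <= p -> approx (n + k) p = approx n p.
Proof.
move=> hp; elim: k => [|k IH]; first by rewrite addn0.
by rewrite addnS /= ifF ?IH //; apply/negbTE; lia.
Qed.

Lemma approx_deg_le n : deg_le (approx n) 0.
Proof. by move=> p hp; apply: approx_pos. Qed.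

Lemma approx_sol n : act P (approx n.+1) (- (n.+1)%:Z - 1) = 0.
Proof.
set j := - (n.+1)%:Z.
rewrite (act_P_triangular j (approx_deg_le n.+1)).
have -> : above (approx n.+1) j = above (approx n) j.
  apply/funext => p; rewrite /above /=; case: ifP => // hp.
  by rewrite ifF //; apply/negbTE; rewrite /j; lia.
have E := act_P_triangular j (approx_deg_le n).
rewrite approx_low in E; last by rewrite /j; lia.
rewrite mulr0 add0r in E.
rewrite /= eqxx -/j -E.
have hj : (j%:~R : K) != 0 by rewrite intr_eq0 /j; apply/negP => /eqP; lia.
by rewrite mulrC divfK // addNr.
Qed.

(* The normalized wave function of P: the limit of the stages. *)
Definition wave : ser K := fun p => approx (absz p) p.

Lemma wave_pos p : 0 < p -> wave p = 0.
Proof. exact: approx_pos. Qed.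

Lemma wave_zero : wave 0 = 1.
Proof. exact: approx_zero. Qed.

Lemma wave_deg_le : deg_le wave 0.
Proof. by move=> p hp; apply: wave_pos. Qed.

Lemma wave_normalized : inOnePlusHminus wave.
Proof. by split; [exact: wave_zero | move=> n hn; apply: wave_pos]. Qed.

Lemma wave_approx n p : - n%:Z <= p -> wave p = approx n p.
Proof.
move=> hp; have [hp0|hp0] := ltrP 0 p; first by rewrite wave_pos // approx_pos.
rewrite /wave (_ : n = (absz p + (n - absz p))%N); last by lia.
by rewrite approx_stable //; lia.
Qed.

Lemma wave_sol : act P wave = (fun _ => 0).
Proof.
apply/funext => i; rewrite (_ : i = (i + 1) - 1); last by lia.
set j := i + 1.
have [hj|hj] := ltrP j 0.
  pose n := (absz j).-1.
  rewrite (act_P_local (g := approx n.+1)).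
    by rewrite (_ : j = - (n.+1)%:Z) ?approx_sol //; rewrite /n; lia.
  by move=> p hp; apply: wave_approx; rewrite /n; lia.
rewrite (act_P_triangular j wave_deg_le).
rewrite (@act_eq0 _ P (above wave j) (j - 1)) ?addr0; last first.
  by move=> p; rewrite /above; case: ifP => // hp; rewrite wave_pos //; lia.
have [hj0|hj0] := ltrP 0 j; first by rewrite wave_pos // mulr0.
by rewrite (_ : j = 0) ?mul0r //; lia.
Qed.

(* Every solution in H has no positive powers of z: reading the
   recursion from the top degree N downwards, j f_j = 0 for j > 0. *)
Lemma solution_deg_le0 (Psi : ser K) : inH Psi -> act P Psi = (fun _ => 0) ->
  deg_le Psi 0.
Proof.
move=> [N hN] hsol.
have hb : deg_le Psi N by move=> p hp; apply: hN.
suff H : forall d : nat, forall p, 0 < p -> N - d%:Z < p -> Psi p = 0.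
  by move=> p hp; apply: (H (absz (N - p) + 1)%N) => //; lia.
elim => [|d IH] p hp hpd; first by apply: hN; lia.
have [h1|h1] := ltrP (N - d%:Z) p; first by apply: IH.
have E := act_P_triangular p hb.
rewrite hsol (@act_eq0 _ P (above Psi p) (p - 1)) ?addr0 in E; last first.
  by move=> q; rewrite /above; case: ifP => // hq; apply: IH; lia.
have hp0 : (p%:~R : K) != 0 by rewrite intr_eq0; apply/negP => /eqP; lia.
by move/esym/eqP: E; rewrite mulf_eq0 (negPf hp0) => /eqP.
Qed.

(* A solution in H is determined by its constant coefficient: the
   recursion determines f_{-n-1} from the f_p with p >= -n. *)
Lemma solution_unique (Psi : ser K) : inH Psi -> act P Psi = (fun _ => 0) ->
  Psi = sscale (Psi 0) wave.
Proof.
move=> hH hsol; have hb := solution_deg_le0 hH hsol.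
have hg : deg_le (sscale (Psi 0) wave) 0.
  by move=> q hq; rewrite /sscale wave_pos ?mulr0.
suff agree : forall n : nat, forall p, - n%:Z <= p -> Psi p = Psi 0 * wave p.
  by apply/funext => p; rewrite /sscale; apply: (agree (absz p)); lia.
elim => [|n IH] p hp.
  have [h1|h1] := ltrP 0 p; first by rewrite hb // wave_pos // mulr0.
  by rewrite (_ : p = 0) ?wave_zero ?mulr1 //; lia.
have [h1|h1] := ltrP p (- n%:Z); last by apply: IH.
have -> : p = - (n.+1)%:Z by lia.
set j := - (n.+1)%:Z.
have E1 := act_P_triangular j hb; rewrite hsol in E1.
have E2 := act_P_triangular j hg.
rewrite act_scale wave_sol mulr0 in E2.
have Eabove : above Psi j = above (sscale (Psi 0) wave) j.
  apply/funext => q; rewrite /above /sscale; case: ifP => // hq.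
  by apply: IH; rewrite /j; lia.
rewrite Eabove in E1.
have hj0 : (j%:~R : K) != 0 by rewrite intr_eq0 /j; apply/negP => /eqP; lia.
apply: (mulfI hj0); apply: (@addIr _ (act P (above (sscale (Psi 0) wave) j) (j - 1))).
by rewrite -E1 E2.
Qed.

End Part1.

Section Part2.
Variable K : numFieldType.

Lemma onePlusDminus_nonpos (G : op K) : inOnePlusDminus G -> op_nonpos G.
Proof.
move=> hG m l hl.
have E : opone K m l = 0.
  by rewrite /opone /scst; case: (m == 0%N); rewrite ifF //; apply/negbTE; lia.
by have := hG m l; rewrite /opsub /ssub E subr0; apply; lia.
Qed.

Lemma onePlusDminus_lead (G : op K) : inOnePlusDminus G -> G 0%N 0 = 1.
Proof.
move=> hG; have := hG 0%N 0; rewrite /opsub /ssub /opone /scst /= => h.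
by apply/eqP; rewrite -subr_eq0; apply/eqP; apply: h.
Qed.

Lemma opdz_nonpos : op_nonpos (opdz K).
Proof.
by move=> m l hl; rewrite /opdz /scst; case: ifP => _; rewrite ifF //; apply/negbTE; lia.
Qed.

Lemma scst_deg_le (c : K) : deg_le (scst c) 0.
Proof. by move=> p hp; rewrite /scst ifF //; apply/negbTE; lia. Qed.

Lemma scst1_Hplus : inHplus (scst (1 : K)).
Proof.
split; first by exists 0 => n hn; apply: scst_deg_le.
by move=> n hn; rewrite /scst ifF //; apply/negbTE; lia.
Qed.

Lemma dz_deg_le (f : ser K) N : deg_le f N -> deg_le (dz f) N.
Proof. by move=> hf p hp; rewrite /dz hf ?mulr0 //; lia. Qed.

(* In characteristic 0 the kernel of d_z consists of the constants. *)
Lemma dz_eq0_const (f : ser K) : (forall p, dz f p = 0) -> f = sscale (f 0) (scst 1).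
Proof.
move=> hdz; apply/funext => p; rewrite /sscale /scst.
case: eqP => [->|hp]; first by rewrite mulr1.
have := hdz (p - 1); rewrite /dz (_ : p - 1 + 1 = p); last by lia.
move/eqP; rewrite mulf_eq0 intr_eq0 (_ : (p == 0) = false) /=; last by apply/negbTE/eqP.
by rewrite mulr0 => /eqP.
Qed.

(* A subspace in Gr^{(0)}_+ has at most one element in 1 + H_-, since such
   elements all project to 1 under pi_+. *)
Lemma Gr0plus_normalized_unique (W : ser K -> Prop) f g : inGr0plus W ->
  W f -> inOnePlusHminus f -> W g -> inOnePlusHminus g -> f = g.
Proof.
have piplus1 (h : ser K) : inOnePlusHminus h -> piplus h = scst 1.
  move=> [h0 hp]; apply/funext => n; rewrite /piplus /scst.
  case: eqP => [->|hn]; first by rewrite h0.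
  by case: ifP => // hn0; apply: hp; lia.
move=> [_ [_ [_ [_ [_ hu]]]]] hWf hf hWg hg.
have [w [_ [_ huniq]]] := hu _ scst1_Hplus.
by rewrite (huniq f hWf (piplus1 f hf)) (huniq g hWg (piplus1 g hg)).
Qed.

Variables G Gi : op K.
Hypothesis hG : inOnePlusDminus G.
Hypothesis hGi : inOnePlusDminus Gi.
Hypothesis hGGi : Defs.comp G Gi = opone K.
Hypothesis hGiG : Defs.comp Gi G = opone K.

Let nG : op_nonpos G := onePlusDminus_nonpos hG.
Let nGi : op_nonpos Gi := onePlusDminus_nonpos hGi.

Lemma act_G_Gi f N : deg_le f N -> act G (act Gi f) = f.
Proof. by move=> hf; rewrite -(act_comp nG nGi hf) hGGi act_opone. Qed.

Lemma act_Gi_G f N : deg_le f N -> act Gi (act G f) = f.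
Proof. by move=> hf; rewrite -(act_comp nGi nG hf) hGiG act_opone. Qed.

Lemma act_PW f N : deg_le f N ->
  act (Defs.comp (Defs.comp G (opdz K)) Gi) f = act G (dz (act Gi f)).
Proof.
move=> hf; have nGdz := comp_nonpos nG opdz_nonpos.
rewrite (act_comp nGdz nGi hf) (act_comp nG opdz_nonpos (act_deg_le nGi hf)).
by rewrite act_opdz.
Qed.

(* The dressed vacuum G.1: it lies in 1 + H_-, because G has leading term 1. *)
Definition dressed_one : ser K := act G (scst 1).

Lemma dressed_one_normalized : inOnePlusHminus dressed_one.
Proof.
have hb : deg_le dressed_one 0 := act_deg_le nG (scst_deg_le 1).
split; last by move=> n hn; apply: hb.
rewrite /dressed_one actE (fsum_nat_prefix (n:=1)).
  rewrite big_ord1 (fsum_int_range (lo:=0) (n:=1)).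
    by rewrite /int_range /= big_seq1 /scst /= falling0 onePlusDminus_lead // !mul1r.
  by move=> x hx; rewrite /scst ifF ?mulr0 //; apply/negbTE; lia.
move=> m hm; rewrite fsbig1 // => s _.
rewrite /scst; case: eqP => [->|]; last by rewrite !mulr0.
by rewrite nG ?mul0r //; lia.
Qed.

Lemma PW_dressed_one : act (Defs.comp (Defs.comp G (opdz K)) Gi) dressed_one = (fun _ => 0).
Proof.
rewrite (act_PW (act_deg_le nG (scst_deg_le 1))) (act_Gi_G (scst_deg_le 1)).
apply/funext => j; apply: act_eq0 => p.
by rewrite /dz /scst; case: eqP => [->|]; rewrite ?mul0r ?mulr0.
Qed.

(* Any solution Psi in 1 + H_- of P_W.Psi = 0 equals G.1: G^{-1}.Psi is
   killed by d_z, hence constant, and the constant is fixed by Psi_0 = 1. *)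
Lemma PW_solution_unique Psi : inOnePlusHminus Psi ->
  act (Defs.comp (Defs.comp G (opdz K)) Gi) Psi = (fun _ => 0) -> Psi = dressed_one.
Proof.
move=> [h0 hpos] hsol.
have bPsi : deg_le Psi 0 by move=> p hp; apply: hpos.
pose phi := act Gi Psi.
have bphi : deg_le phi 0 := act_deg_le nGi bPsi.
rewrite (act_PW bPsi) -/phi in hsol.
have Ephi : phi = sscale (phi 0) (scst 1).
  apply: dz_eq0_const => p.
  by rewrite -(act_Gi_G (dz_deg_le bphi)) hsol; apply: act_eq0.
have EPsi : Psi = sscale (phi 0) dressed_one.
  by apply/funext => j; rewrite -(act_G_Gi bPsi) -/phi {1}Ephi act_scale.
have Ec : phi 0 = 1.
  have [one0 _] := dressed_one_normalized.
  by move/(f_equal (fun g => g 0)): EPsi; rewrite /sscale one0 h0 mulr1.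
by rewrite EPsi Ec; apply/funext => j; rewrite /sscale mul1r.
Qed.

End Part2.

Unset Implicit Arguments.
Set Strict Implicit.

Theorem mainTheorem2 (R : realType) :
  (* Part 1: for every P in d_z + z^{-1} D_-, the solutions of P . Psi = 0 in H
     form a line spanned by a (nonzero) solution Psi0 normalized in 1 + H_-. *)
  (forall P : op R[i], inDzPlusZinvDminus P ->
     exists Psi0 : ser R[i],
       [/\ inOnePlusHminus Psi0, act P Psi0 = (fun _ => 0) &
           forall Psi : ser R[i], inH Psi -> act P Psi = (fun _ => 0) ->
             exists c : R[i], Psi = sscale c Psi0]) /\
  (* Part 2: for W in Gr^{(0)}_+, P_W . Psi = 0 has a unique solution in 1 + H_-,
     and it is the wave function, the unique element of W /\ (1 + H_-). *)
  (forall (W : ser R[i] -> Prop) (P : op R[i]), inGr0plus W -> isPW W P ->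
     exists Psi0 : ser R[i],
       [/\ inOnePlusHminus Psi0, W Psi0, act P Psi0 = (fun _ => 0),
           (forall Psi, inOnePlusHminus Psi -> act P Psi = (fun _ => 0) -> Psi = Psi0) &
           (forall Psi, inOnePlusHminus Psi -> W Psi -> Psi = Psi0)]).
Proof.
split.
  move=> P hP; exists (wave P); split.
  - exact: wave_normalized.
  - exact: wave_sol.
  - by move=> Psi hH hsol; exists (Psi 0); apply: solution_unique.
move=> W P hW [G [Gi [[hG hWG] hGi hGGi hGiG ->]]].
have hWone : W (dressed_one G) by apply/hWG; exists (scst 1); split => //; exact: scst1_Hplus.
exists (dressed_one G); split.
- exact: dressed_one_normalized.
- exact: hWone.
- exact: PW_dressed_one.
- by move=> Psi; apply: PW_solution_unique.
- move=> Psi hPsi hWPsi; apply: Gr0plus_normalized_unique hW hWPsi hPsi hWone _.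
  exact: dressed_one_normalized.
Qed.
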